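(* Let $\mathcal P$ be a 2-reflex orthostack made of three bricks with canonical contact rectangles and signature $\sqcap_i\sqcap_j$ (for some types $i,j\in\{1,2,3,4\}$) with $j\neq 4$. Then $\mathcal P$ is guarded by a single vertical closed face guard.
   Context: A 2-reflex orthostack is an orthogonal polyhedron with no reflex edge parallel to the vertical ($z$) axis all of whose horizontal cross-sections are simply connected; it is a stack of bricks $B_t=R_t\times[z_{t-1},z_t]$, $t=1,\dots,k$ (bottom to top), $z_0<\dots<z_k$, each $R_t$ an axis-parallel rectangle, $R_t\ne R_{t+1}$. The contact rectangle between $B_t$ and $B_{t+1}$ is $(R_t\cap R_{t+1})\times\{z_t\}$; it is canonical if one of $R_t,R_{t+1}$ is strictly contained in the other and their set difference is connected (so exactly one horizontal face of the orthostack lies in the plane $z=z_t$). The type of a canonical contact rectangle is the number $i\in\{1,2,3,4\}$ of sides of the smaller of the two rectangles that are not contained in the boundary of the larger one (equivalently, the number of edges of the orthostack on its perimeter). The contact is denoted $\sqcup_i$ if $R_t\subsetneq R_{t+1}$ (lower brick's vertical projection inside the upper one's) and $\sqcap_i$ if $R_{t+1}\subsetneq R_t$. The signature is the sequence of these symbols for $t=1,\dots,k-1$, read from bottom to top. A point $x$ is visible to $y$ if the segment $xy$ does not meet the exterior of the polyhedron; a closed face guard is a face including its boundary; it guards the polyhedron if every point is visible from some point of it. A face is vertical if it is parallel to the $z$-axis, horizontal if orthogonal to it. *)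

From Stdlib Require Import Reals ClassicalEpsilon.
Open Scope R_scope.

Definition pt2 : Type := (R * R)%type.
Record pt3 : Type := P3 { px : R; py : R; pz : R }.

Definition d2 (p q : pt2) : R :=
  (fst p - fst q) ^ 2 + (snd p - snd q) ^ 2.
Definition d3 (p q : pt3) : R :=
  (px p - px q) ^ 2 + (py p - py q) ^ 2 + (pz p - pz q) ^ 2.

Definition openS {T : Type} (d : T -> T -> R) (S : T -> Prop) : Prop :=
  forall p, S p -> exists e, 0 < e /\ forall q, d p q < e -> S q.
Definition interiorS {T : Type} (d : T -> T -> R) (S : T -> Prop) (p : T) : Prop :=
  exists e, 0 < e /\ forall q, d p q < e -> S q.
Definition closureS {T : Type} (d : T -> T -> R) (S : T -> Prop) (p : T) : Prop :=
  forall e, 0 < e -> exists q, S q /\ d p q < e.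
Definition boundaryS {T : Type} (d : T -> T -> R) (S : T -> Prop) (p : T) : Prop :=
  closureS d S p /\ ~ interiorS d S p.
Definition connectedS {T : Type} (d : T -> T -> R) (S : T -> Prop) : Prop :=
  ~ exists U V : T -> Prop,
      openS d U /\ openS d V /\
      (forall p, S p -> U p \/ V p) /\
      (exists p, S p /\ U p) /\ (exists p, S p /\ V p) /\
      (forall p, S p -> U p -> V p -> False).
Definition componentS {T : Type} (d : T -> T -> R) (S C : T -> Prop) : Prop :=
  (exists p, C p) /\ (forall p, C p -> S p) /\ connectedS d C /\
  forall C' : T -> Prop, (forall p, C p -> C' p) -> (forall p, C' p -> S p) ->
    connectedS d C' -> forall p, C' p -> C p.

Record rect : Type := Rect { xlo : R; xhi : R; ylo : R; yhi : R }.
Definition rect_ok (r : rect) : Prop := xlo r < xhi r /\ ylo r < yhi r.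
Definition inRect (r : rect) (p : pt2) : Prop :=
  xlo r <= fst p <= xhi r /\ ylo r <= snd p <= yhi r.

Inductive side : Type := SXlo | SXhi | SYlo | SYhi.
Definition sideSet (r : rect) (s : side) (p : pt2) : Prop :=
  match s with
  | SXlo => fst p = xlo r /\ ylo r <= snd p <= yhi r
  | SXhi => fst p = xhi r /\ ylo r <= snd p <= yhi r
  | SYlo => snd p = ylo r /\ xlo r <= fst p <= xhi r
  | SYhi => snd p = yhi r /\ xlo r <= fst p <= xhi r
  end.

Definition ind (P : Prop) : nat :=
  if excluded_middle_informative P then 1%nat else 0%nat.

Definition side_free (big small : rect) (s : side) : Prop :=
  ~ (forall p, sideSet small s p -> boundaryS d2 (inRect big) p).

Definition contact_type (big small : rect) : nat :=
  (ind (side_free big small SXlo) + ind (side_free big small SXhi)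
   + ind (side_free big small SYlo) + ind (side_free big small SYhi))%nat.

Definition contact_sqcap (low up : rect) (i : nat) : Prop :=
  (forall p, inRect up p -> inRect low p) /\
  (exists p, inRect low p /\ ~ inRect up p) /\
  connectedS d2 (fun p => inRect low p /\ ~ inRect up p) /\
  contact_type low up = i.

Definition stack3 (R1 R2 R3 : rect) (z0 z1 z2 z3 : R) (p : pt3) : Prop :=
  (inRect R1 (px p, py p) /\ z0 <= pz p <= z1) \/
  (inRect R2 (px p, py p) /\ z1 <= pz p <= z2) \/
  (inRect R3 (px p, py p) /\ z2 <= pz p <= z3).

(** points of the plane [H] near which the boundary of [P] coincides with [H]
    (relative interior points of faces lying in [H]) *)
Definition face_interior (P H : pt3 -> Prop) (p : pt3) : Prop :=
  H p /\ boundaryS d3 P p /\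
  exists e, 0 < e /\ forall q, d3 p q < e -> (boundaryS d3 P q <-> H q).

Definition closed_face_in (P H F : pt3 -> Prop) : Prop :=
  exists C, componentS d3 (face_interior P H) C /\
            forall p, F p <-> closureS d3 C p.

Definition vplane (a b c : R) (p : pt3) : Prop := a * px p + b * py p = c.

Definition vertical_closed_face (P F : pt3 -> Prop) : Prop :=
  exists a b c, (a <> 0 \/ b <> 0) /\ closed_face_in P (vplane a b c) F.

Definition visible (P : pt3 -> Prop) (x y : pt3) : Prop :=
  forall l, 0 <= l <= 1 ->
    P (P3 (px x + l * (px y - px x)) (py x + l * (py y - py x))
          (pz x + l * (pz y - pz x))).

Definition guards (P F : pt3 -> Prop) : Prop :=
  forall p, P p -> exists g, F g /\ visible P g p.

From Pilot Require Import Defs.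
From Stdlib Require Import Reals ClassicalEpsilon.
From Stdlib Require Import Classical Lra Psatz.
Open Scope R_scope.

(** Since the upper contact has type [j <> 4], some side [s] of the top
    rectangle [R3] lies in the boundary of the middle rectangle [R2], hence is
    contained in the same side of [R2].  The vertical wall over that side,
    between heights [z1] and [z3], is part of a vertical face of the
    orthostack: near each of its points the solid is a half-space bounded by
    the wall's plane.  The closure of the face component containing the wall
    guards everything, because each of the three bricks is convex and meets
    the closed wall (the bottom brick at height [z1], since [R3 ⊆ R2 ⊆ R1]). *)

Definition lerp (x y : pt3) (l : R) : pt3 :=
  P3 (px x + l * (px y - px x)) (py x + l * (py y - py x)) (pz x + l * (pz y - pz x)).

(** [S] is convex: it contains every segment joining two of its points; this is
    exactly what is needed for [visible] between points of [S] *)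
Definition conv (S : pt3 -> Prop) : Prop :=
  forall x y l, S x -> S y -> 0 <= l <= 1 -> S (lerp x y l).

Lemma lerp0 p q : lerp p q 0 = p.
Proof. destruct p; unfold lerp; simpl; f_equal; ring. Qed.

Lemma lerp1 p q : lerp p q 1 = q.
Proof. destruct q; unfold lerp; simpl; f_equal; ring. Qed.

Lemma d3_lerp p q s t : d3 (lerp p q s) (lerp p q t) = (t - s) ^ 2 * d3 p q.
Proof. unfold d3, lerp; simpl; ring. Qed.

Lemma lerp_closed lo hi u v l : lo <= u <= hi -> lo <= v <= hi -> 0 <= l <= 1 ->
  lo <= u + l * (v - u) <= hi.
Proof. intros. split; nra. Qed.

Lemma lerp_open lo hi u v l : lo < u < hi -> lo < v < hi -> 0 <= l <= 1 ->
  lo < u + l * (v - u) < hi.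
Proof.
  intros Hu Hv Hl. destruct (Req_dec l 1) as [->|Hl1]; [lra|].
  split; nra.
Qed.

Lemma d3_nonneg p q : 0 <= d3 p q.
Proof.
  unfold d3. pose proof (pow2_ge_0 (px p - px q)).
  pose proof (pow2_ge_0 (py p - py q)). pose proof (pow2_ge_0 (pz p - pz q)). lra.
Qed.

Lemma d3_refl p : d3 p p = 0.
Proof. unfold d3; ring. Qed.

Lemma d3_tri p q q' r : d3 p q < r / 4 -> d3 q q' < r / 4 -> d3 p q' < r.
Proof.
  unfold d3. intros H1 H2.
  pose proof (pow2_ge_0 (px p - 2 * px q + px q')).
  pose proof (pow2_ge_0 (py p - 2 * py q + py q')).
  pose proof (pow2_ge_0 (pz p - 2 * pz q + pz q')). nra.
Qed.

Lemma proj_sq_le a b dx dy : a * a + b * b = 1 -> (a * dx + b * dy) ^ 2 <= dx ^ 2 + dy ^ 2.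
Proof.
  intros Hab. pose proof (pow2_ge_0 (a * dy - b * dx)).
  assert (Hid : (a * dx + b * dy) ^ 2 + (a * dy - b * dx) ^ 2
                = (a * a + b * b) * (dx ^ 2 + dy ^ 2)) by ring.
  rewrite Hab in Hid. lra.
Qed.

Lemma proj_d3_le a b p q : a * a + b * b = 1 ->
  (a * px q + b * py q - (a * px p + b * py p)) ^ 2 <= d3 p q.
Proof.
  intros Hab. unfold d3. pose proof (pow2_ge_0 (pz p - pz q)).
  pose proof (proj_sq_le a b (px q - px p) (py q - py p) Hab).
  replace (a * px q + b * py q - (a * px p + b * py p))
    with (a * (px q - px p) + b * (py q - py p)) by ring.
  replace ((px p - px q) ^ 2) with ((px q - px p) ^ 2) by ring.
  replace ((py p - py q) ^ 2) with ((py q - py p) ^ 2) by ring. lra.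
Qed.

Lemma pz_d3_le p q : (pz q - pz p) ^ 2 <= d3 p q.
Proof.
  unfold d3. pose proof (pow2_ge_0 (px p - px q)). pose proof (pow2_ge_0 (py p - py q)).
  replace ((pz p - pz q) ^ 2) with ((pz q - pz p) ^ 2) by ring. lra.
Qed.

Lemma sq_bound u g : 0 < g -> u ^ 2 < g * g -> - g < u < g.
Proof. intros Hg H. simpl in H. split; apply Rnot_le_lt; intro; nra. Qed.

Lemma min5 a1 a2 a3 a4 a5 : 0 < a1 -> 0 < a2 -> 0 < a3 -> 0 < a4 -> 0 < a5 ->
  exists g, 0 < g /\ g <= a1 /\ g <= a2 /\ g <= a3 /\ g <= a4 /\ g <= a5.
Proof.
  intros. exists (Rmin a1 (Rmin a2 (Rmin a3 (Rmin a4 a5)))).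
  unfold Rmin; repeat destruct (Rle_dec _ _); repeat split; lra.
Qed.

Lemma closure_self (C : pt3 -> Prop) p : C p -> closureS d3 C p.
Proof. intros H e He. exists p. rewrite d3_refl. auto. Qed.

Lemma closure_from_above (C : pt3 -> Prop) x y z zm : z < zm ->
  (forall t, 0 < t < zm - z -> C (P3 x y (z + t))) -> closureS d3 C (P3 x y z).
Proof.
  intros Hz HC e He.
  set (m := Rmin (zm - z) (Rmin 1 e)).
  assert (0 < m) by (apply Rmin_glb_lt; [lra|apply Rmin_glb_lt; lra]).
  assert (m <= zm - z) by apply Rmin_l.
  assert (m <= 1 /\ m <= e) as [] by (unfold m, Rmin; repeat destruct (Rle_dec _ _); lra).
  exists (P3 x y (z + m / 2)). split; [apply HC; lra|].
  unfold d3; simpl. nra.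
Qed.

Lemma lerp_uniform_cont p q e : 0 < e ->
  exists m, 0 < m /\ forall s t, - m <= t - s <= m -> d3 (lerp p q s) (lerp p q t) < e.
Proof.
  intros He. pose proof (d3_nonneg p q) as HD.
  exists (Rmin 1 (e / (2 * (d3 p q + 1)))). split.
  { apply Rmin_glb_lt; [lra|]. apply Rdiv_lt_0_compat; lra. }
  intros s t Hts. rewrite d3_lerp.
  set (m := Rmin 1 (e / (2 * (d3 p q + 1)))) in *.
  assert (m <= 1) by apply Rmin_l.
  assert (Hme : m * (2 * (d3 p q + 1)) <= e).
  { pose proof (Rmin_r 1 (e / (2 * (d3 p q + 1)))) as Hr. fold m in Hr.
    apply Rmult_le_compat_r with (r := 2 * (d3 p q + 1)) in Hr; [|lra].
    unfold Rdiv in Hr. rewrite Rmult_assoc, Rinv_l in Hr; lra. }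
  assert ((t - s) ^ 2 <= m) by nra.
  nra.
Qed.

(** convex sets are connected: the supremum of the parameters whose segment
    point lies in [U] can lie neither in [U] nor in [V] *)
Lemma convex_connected S : conv S -> connectedS d3 S.
Proof.
  intros HS [U [V [HU [HV [Hcov [[p [Sp Up]] [[q [Sq Vq]] Hdis]]]]]]].
  set (E := fun t => 0 <= t <= 1 /\ U (lerp p q t)).
  destruct (completeness E) as [s [Hub Hlub]].
  { exists 1. intros t [Ht _]. lra. }
  { exists 0. split; [lra|]. rewrite lerp0; auto. }
  assert (Hs0 : 0 <= s) by (apply Hub; split; [lra|]; rewrite lerp0; auto).
  assert (Hs1 : s <= 1) by (apply Hlub; intros t [Ht _]; lra).
  assert (HSs : S (lerp p q s)) by (apply HS; auto).
  destruct (Hcov _ HSs) as [Us|Vs].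
  - (* the sup lies in [U]: [U] reaches beyond it *)
    destruct (HU _ Us) as [e [He Hball]].
    destruct (lerp_uniform_cont p q e He) as [m [Hm Hcont]].
    destruct (Req_dec s 1) as [->|Hs1'].
    { rewrite lerp1 in Us. exact (Hdis q Sq Us Vq). }
    set (t := s + Rmin (1 - s) m).
    assert (0 < Rmin (1 - s) m) by (apply Rmin_glb_lt; lra).
    assert (Rmin (1 - s) m <= 1 - s /\ Rmin (1 - s) m <= m) as []
      by (split; [apply Rmin_l|apply Rmin_r]).
    assert (Et : E t).
    { split; [unfold t; lra|]. apply Hball, Hcont. unfold t; lra. }
    specialize (Hub t Et). unfold t in Hub. lra.
  - (* the sup lies in [V]: points of [U] approach it from within [V] *)
    destruct (HV _ Vs) as [e [He Hball]].
    destruct (lerp_uniform_cont p q e He) as [m [Hm Hcont]].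
    destruct (classic (exists t, E t /\ s - m < t)) as [[t [[Ht01 Ut] Ht]]|Hno].
    + assert (t <= s) by (apply Hub; split; auto).
      apply (Hdis (lerp p q t)); [apply HS; auto| auto |].
      apply Hball, Hcont. lra.
    + assert (s <= s - m); [|lra].
      apply Hlub. intros t Et. apply Rnot_lt_le. intros Hlt. apply Hno. eauto.
Qed.

(** every connected subset of [S] extends to a connected component of [S]:
    the union of all connected subsets of [S] containing it *)
Lemma component_exists {T} (d : T -> T -> R) (S C0 : T -> Prop) :
  (exists p, C0 p) -> (forall p, C0 p -> S p) -> connectedS d C0 ->
  exists C, componentS d S C /\ forall p, C0 p -> C p.
Proof.
  intros [p0 H0] HS Hc.
  set (C := fun p => exists C', (forall x, C0 x -> C' x) /\ (forall x, C' x -> S x)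
                                /\ connectedS d C' /\ C' p).
  assert (HC0 : forall p, C0 p -> C p) by (intros p Hp; exists C0; auto).
  exists C. split; [|exact HC0].
  split; [exists p0; auto|].
  split; [intros p [C' [_ [HC'S [_ Hp]]]]; auto|].
  split.
  - (* a separation of [C] separates the member containing the far point *)
    intros [U [V [HU [HV [Hcov [[p [Cp Up]] [[q [Cq Vq]] Hdis]]]]]]].
    destruct (Hcov p0 (HC0 p0 H0)) as [Up0|Vp0].
    + destruct Cq as [C' [Hsub [HS' [Hcn Hq]]]].
      apply Hcn. exists U, V. repeat split; auto.
      * intros x Hx. apply Hcov. exists C'. auto.
      * exists p0. auto.
      * exists q. auto.
      * intros x Hx. apply Hdis. exists C'. auto.
    + destruct Cp as [C' [Hsub [HS' [Hcn Hp]]]].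
      apply Hcn. exists U, V. repeat split; auto.
      * intros x Hx. apply Hcov. exists C'. auto.
      * exists p. auto.
      * exists p0. auto.
      * intros x Hx. apply Hdis. exists C'. auto.
  - intros C' Hsub HC'S Hconn p Hp. exists C'. repeat split; auto.
Qed.

Section LocalHalfspace.
Variables (P : pt3 -> Prop) (a b c : R) (p : pt3) (r : R).
Hypothesis Hab : a * a + b * b = 1.
Hypothesis Hr : 0 < r.
Hypothesis Hloc : forall q, d3 p q < r -> (P q <-> a * px q + b * py q >= c).

Let f (q : pt3) : R := a * px q + b * py q.

Lemma ball_same_side q q' : d3 p q < r / 4 -> f q <> c ->
  d3 q q' < Rmin (r / 4) ((f q - c) ^ 2) -> (P q' <-> c < f q).
Proof.
  intros Hq Hne Hd.
  assert (Hd1 : d3 q q' < r / 4) by (eapply Rlt_le_trans; [exact Hd|apply Rmin_l]).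
  assert (Hd2 : (f q' - f q) ^ 2 < (f q - c) ^ 2).
  { eapply Rle_lt_trans; [apply (proj_d3_le a b q q' Hab)|].
    eapply Rlt_le_trans; [exact Hd|apply Rmin_r]. }
  rewrite (Hloc q' (d3_tri _ _ _ _ Hq Hd1)). fold (f q').
  split; intros H.
  - apply Rge_le in H. apply Rnot_le_lt; intros H'; nra.
  - apply Rle_ge, Rnot_lt_le; intros H'; nra.
Qed.

Lemma boundary_iff_plane q : d3 p q < r / 4 -> (boundaryS d3 P q <-> f q = c).
Proof.
  intros Hq. destruct (Req_dec (f q) c) as [Heq|Hne].
  - split; [auto|intros _].
    split; [apply closure_self, Hloc; unfold f in Heq; lra|].
    (* stepping a little against the normal leaves [P] *)
    intros [e [He Hint]].
    set (m := Rmin 1 (Rmin e (r / 4))).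
    assert (0 < m) by (apply Rmin_glb_lt; [lra|apply Rmin_glb_lt; lra]).
    assert (m <= 1 /\ m <= e /\ m <= r / 4) as (? & ? & ?)
      by (unfold m, Rmin; repeat destruct (Rle_dec _ _); lra).
    set (t := m / 2).
    set (q' := P3 (px q - t * a) (py q - t * b) (pz q)).
    assert (Hd : d3 q q' = t ^ 2).
    { unfold d3, q'; simpl. transitivity (t ^ 2 * (a * a + b * b)); [ring|].
      rewrite Hab; ring. }
    assert (Ht2 : t ^ 2 < m) by (unfold t; simpl; nra).
    assert (Pq' : P q') by (apply Hint; lra).
    apply (Hloc q') in Pq'; [|apply (d3_tri _ q); auto; lra].
    unfold q' in Pq'; simpl in Pq'.
    assert (Hshift : a * (px q - t * a) + b * (py q - t * b) = f q - t * (a * a + b * b))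
      by (unfold f; ring).
    rewrite Hab in Hshift. unfold t in *. lra.
  - split; [|contradiction]. intros [Hcl Hni].
    assert (He : 0 < Rmin (r / 4) ((f q - c) ^ 2)).
    { apply Rmin_glb_lt; [lra|].
      destruct (Rtotal_order (f q) c) as [?|[?|?]]; [nra|contradiction|nra]. }
    destruct (Rlt_or_le c (f q)) as [Hgt|Hle].
    + exfalso. apply Hni. exists (Rmin (r / 4) ((f q - c) ^ 2)). split; auto.
      intros q' Hq'. apply (ball_same_side q q'); auto.
    + destruct (Hcl _ He) as [q' [Pq' Hd]].
      apply (ball_same_side q q') in Pq'; auto. lra.
Qed.

Lemma halfspace_face_interior : f p = c -> face_interior P (vplane a b c) p.
Proof.
  intros Hp. split; [exact Hp|]. split.
  - apply (boundary_iff_plane p); [rewrite d3_refl; lra | exact Hp].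
  - exists (r / 4). split; [lra|]. intros q Hq. apply boundary_iff_plane; auto.
Qed.
End LocalHalfspace.

Lemma guard_of_convex_wall (P W : pt3 -> Prop) (a b c : R) :
  a * a + b * b = 1 -> conv W -> (exists p, W p) ->
  (forall p, W p -> a * px p + b * py p = c /\
     exists r, 0 < r /\ forall q, d3 p q < r -> (P q <-> a * px q + b * py q >= c)) ->
  (forall p, P p -> exists B : pt3 -> Prop,
     conv B /\ (forall q, B q -> P q) /\ B p /\ exists g, closureS d3 W g /\ B g) ->
  exists F, vertical_closed_face P F /\ guards P F.
Proof.
  intros Hab HW Hne Hloc Hcover.
  destruct (component_exists d3 (face_interior P (vplane a b c)) W Hne)
    as [C [HC HWC]].
  { intros p Hp. destruct (Hloc p Hp) as [Hp1 [r [Hr Hl]]].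
    exact (halfspace_face_interior P a b c p r Hab Hr Hl Hp1). }
  { apply convex_connected; auto. }
  exists (closureS d3 C). split.
  - exists a, b, c. split.
    + destruct (Req_dec a 0); [right; intro; subst; lra | left; auto].
    + exists C. split; [auto|tauto].
  - intros p Pp. destruct (Hcover p Pp) as [B [HB [HBP [Bp [g [Wg Bg]]]]]].
    exists g. split.
    + intros e He. destruct (Wg e He) as [q [Wq Hd]]. eauto.
    + intros l Hl. exact (HBP _ (HB g p l Bg Bp Hl)).
Qed.

(** For each side [s] we use the quarter-turn of the plane taking the inward
    normal [nrm s] of side [s] to the positive [x] direction.  It maps an
    axis-parallel rectangle [r] to the rectangle [turnR s r] and side [s] of [r]
    to the left side of [turnR s r]; this lets the four possible shared sides
    be treated by a single argument. *)
Definition nrm (s : side) : R * R :=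
  match s with SXlo => (1, 0) | SXhi => (-1, 0) | SYlo => (0, 1) | SYhi => (0, -1) end.

Definition turn (s : side) (p : pt2) : pt2 :=
  (fst (nrm s) * fst p + snd (nrm s) * snd p, - snd (nrm s) * fst p + fst (nrm s) * snd p).

Definition unturn (s : side) (p : pt2) : pt2 :=
  (fst (nrm s) * fst p - snd (nrm s) * snd p, snd (nrm s) * fst p + fst (nrm s) * snd p).

Definition turnR (s : side) (r : rect) : rect :=
  match s with
  | SXlo => r
  | SXhi => Rect (- xhi r) (- xlo r) (- yhi r) (- ylo r)
  | SYlo => Rect (ylo r) (yhi r) (- xhi r) (- xlo r)
  | SYhi => Rect (- yhi r) (- ylo r) (xlo r) (xhi r)
  end.

Lemma nrm_unit s : fst (nrm s) * fst (nrm s) + snd (nrm s) * snd (nrm s) = 1.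
Proof. destruct s; simpl; ring. Qed.

Lemma turn_unturn s p : turn s (unturn s p) = p.
Proof.
  destruct p as [u v]. unfold turn, unturn; simpl.
  pose proof (nrm_unit s) as Hn.
  f_equal; [transitivity ((fst (nrm s) * fst (nrm s) + snd (nrm s) * snd (nrm s)) * u)
           |transitivity ((fst (nrm s) * fst (nrm s) + snd (nrm s) * snd (nrm s)) * v)];
    try ring; rewrite Hn; ring.
Qed.

Lemma rect_ok_turn s r : rect_ok r -> rect_ok (turnR s r).
Proof. destruct s; unfold rect_ok; simpl; lra. Qed.

Lemma inRect_turn s r p : inRect r p <-> inRect (turnR s r) (turn s p).
Proof.
  destruct s, p as [x y]; unfold inRect, turn; simpl;
    split; intros [[? ?] [? ?]]; repeat split; lra.
Qed.

Lemma sideSet_turn s r p : sideSet r s p <-> sideSet (turnR s r) SXlo (turn s p).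
Proof.
  destruct s, p as [x y]; unfold sideSet, turn; simpl;
    split; intros [? [? ?]]; repeat split; lra.
Qed.

Definition nested (r r' : rect) : Prop := forall p, inRect r p -> inRect r' p.

Lemma nested_turn s r r' : nested r r' -> nested (turnR s r) (turnR s r').
Proof.
  intros H p Hp. rewrite <- (turn_unturn s p) in *.
  apply inRect_turn, H, (inRect_turn s). exact Hp.
Qed.

Lemma nested_bounds r r' : rect_ok r -> nested r r' ->
  xlo r' <= xlo r /\ xhi r <= xhi r' /\ ylo r' <= ylo r /\ yhi r <= yhi r'.
Proof.
  intros [H1 H2] H.
  destruct (H (xlo r, ylo r)) as [[? ?] [? ?]]; [unfold inRect; simpl; lra|].
  destruct (H (xhi r, yhi r)) as [[? ?] [? ?]]; [unfold inRect; simpl; lra|].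
  simpl in *. lra.
Qed.

Lemma interior_turn s r p :
  xlo (turnR s r) < fst (turn s p) < xhi (turnR s r) ->
  ylo (turnR s r) < snd (turn s p) < yhi (turnR s r) ->
  interiorS Defs.d2 (inRect r) p.
Proof.
  intros Hx Hy.
  destruct (min5 (fst (turn s p) - xlo (turnR s r)) (xhi (turnR s r) - fst (turn s p))
                 (snd (turn s p) - ylo (turnR s r)) (yhi (turnR s r) - snd (turn s p)) 1)
    as [g [Hg [? [? [? [? _]]]]]]; try lra.
  exists (g * g). split; [nra|]. intros q Hq. apply (inRect_turn s).
  pose proof (nrm_unit s) as Hn.
  assert (Hn' : - snd (nrm s) * - snd (nrm s) + fst (nrm s) * fst (nrm s) = 1) by lra.
  destruct p as [x y], q as [x' y']. unfold Defs.d2 in Hq; cbn [fst snd] in Hq.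
  pose proof (proj_sq_le _ _ (x' - x) (y' - y) Hn) as Hf.
  pose proof (proj_sq_le _ _ (x' - x) (y' - y) Hn') as Hg'.
  replace ((x - x') ^ 2) with ((x' - x) ^ 2) in Hq by ring.
  replace ((y - y') ^ 2) with ((y' - y) ^ 2) in Hq by ring.
  pose proof (sq_bound _ g Hg (Rle_lt_trans _ _ _ Hf Hq)).
  pose proof (sq_bound _ g Hg (Rle_lt_trans _ _ _ Hg' Hq)).
  unfold turn, inRect in *; simpl in *. split; split; lra.
Qed.

Lemma ind_true (P : Prop) : P -> Defs.ind P = 1%nat.
Proof. intros H. unfold Defs.ind. destruct (excluded_middle_informative P); [reflexivity|contradiction]. Qed.

Lemma boundary_side_of_type_ne4 big small : contact_type big small <> 4%nat ->
  exists s, forall p, sideSet small s p -> boundaryS Defs.d2 (inRect big) p.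
Proof.
  intros H. destruct (classic (exists s, ~ side_free big small s)) as [[s Hs]|Hall].
  - exists s. exact (NNPP _ Hs).
  - exfalso. apply H.
    assert (Hfree : forall s, side_free big small s)
      by (intros s; apply NNPP; intros Hn; apply Hall; exists s; exact Hn).
    unfold contact_type.
    rewrite (ind_true _ (Hfree SXlo)), (ind_true _ (Hfree SXhi)),
            (ind_true _ (Hfree SYlo)), (ind_true _ (Hfree SYhi)).
    reflexivity.
Qed.

(** a side of a nested rectangle lying in the boundary of the outer one is
    contained in the corresponding side of the outer one: otherwise its
    midpoint would be interior *)
Lemma shared_side (r r' : rect) (s : side) : rect_ok r -> nested r r' ->
  (forall p, sideSet r s p -> boundaryS Defs.d2 (inRect r') p) ->
  xlo (turnR s r) = xlo (turnR s r').
Proof.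
  intros Hok Hn Hs.
  pose proof (rect_ok_turn s r Hok) as [Hx Hy].
  destruct (nested_bounds _ _ (rect_ok_turn s r Hok) (nested_turn s r r' Hn))
    as (? & ? & ? & ?).
  destruct (Req_dec (xlo (turnR s r)) (xlo (turnR s r'))) as [|Hne]; [auto|exfalso].
  set (mid := (ylo (turnR s r) + yhi (turnR s r)) / 2).
  set (p0 := unturn s (xlo (turnR s r), mid)).
  assert (Hp0 : turn s p0 = (xlo (turnR s r), mid)) by apply turn_unturn.
  destruct (Hs p0) as [_ Hni].
  - apply sideSet_turn. rewrite Hp0. unfold sideSet, mid; simpl; lra.
  - apply Hni, (interior_turn s). all: rewrite Hp0; unfold mid; simpl; lra.
Qed.

Definition flat (p : pt3) : pt2 := (px p, py p).

Lemma turn_flat_lerp s x y l :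
  turn s (flat (lerp x y l)) =
  (fst (turn s (flat x)) + l * (fst (turn s (flat y)) - fst (turn s (flat x))),
   snd (turn s (flat x)) + l * (snd (turn s (flat y)) - snd (turn s (flat x)))).
Proof. unfold turn, flat, lerp; simpl; f_equal; ring. Qed.

Lemma turn_flat_close s p q g : 0 < g -> d3 p q < g * g ->
  - g < fst (turn s (flat q)) - fst (turn s (flat p)) < g /\
  - g < snd (turn s (flat q)) - snd (turn s (flat p)) < g.
Proof.
  intros Hg Hq. pose proof (nrm_unit s) as Hn.
  assert (Hn' : - snd (nrm s) * - snd (nrm s) + fst (nrm s) * fst (nrm s) = 1) by lra.
  split; apply (sq_bound _ g Hg); eapply Rle_lt_trans; try exact Hq.
  - exact (proj_d3_le _ _ p q Hn).
  - exact (proj_d3_le _ _ p q Hn').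
Qed.

Definition brick (r : rect) (za zb : R) (p : pt3) : Prop :=
  inRect r (flat p) /\ za <= pz p <= zb.

Lemma brick_conv r za zb : conv (brick r za zb).
Proof.
  intros x y l [[? ?] ?] [[? ?] ?] Hl; unfold brick, inRect, flat, lerp in *; simpl in *.
  refine (conj (conj _ _) _); apply lerp_closed; auto.
Qed.

Section SharedWall.
Variables (R1 R2 R3 : rect) (z0 z1 z2 z3 : R) (s : side).
Hypothesis ok3 : rect_ok R3.
Hypotheses (h01 : z0 < z1) (h12 : z1 < z2) (h23 : z2 < z3).
Hypotheses (H12 : nested R2 R1) (H23 : nested R3 R2).
Hypothesis Hshared : xlo (turnR s R3) = xlo (turnR s R2).

Definition wall (p : pt3) : Prop :=
  fst (turn s (flat p)) = xlo (turnR s R3) /\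
  ylo (turnR s R3) < snd (turn s (flat p)) < yhi (turnR s R3) /\ z1 < pz p < z3.

Lemma wall_conv : conv wall.
Proof.
  intros x y l (Hx1 & Hx2 & Hx3) (Hy1 & Hy2 & Hy3) Hl. unfold wall.
  rewrite turn_flat_lerp; cbn [fst snd]. rewrite Hx1, Hy1.
  split; [ring|]. split; [|unfold lerp; cbn [pz]]; apply lerp_open; auto.
Qed.

Lemma wall_halfspace p : wall p ->
  fst (nrm s) * px p + snd (nrm s) * py p = xlo (turnR s R3) /\
  exists r, 0 < r /\ forall q, d3 p q < r ->
    (stack3 R1 R2 R3 z0 z1 z2 z3 q <->
     fst (nrm s) * px q + snd (nrm s) * py q >= xlo (turnR s R3)).
Proof.
  intros (Hf & Hg & Hz). split; [exact Hf|].
  destruct ok3 as [Hx3 Hy3].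
  pose proof (rect_ok_turn s R3 ok3) as [Hx Hy].
  destruct (nested_bounds _ _ (rect_ok_turn s R3 ok3) (nested_turn s R3 R2 H23))
    as (? & ? & ? & ?).
  destruct (min5 (snd (turn s (flat p)) - ylo (turnR s R3))
                 (yhi (turnR s R3) - snd (turn s (flat p)))
                 (pz p - z1) (z3 - pz p) (xhi (turnR s R3) - xlo (turnR s R3)))
    as [g (Hg0 & ? & ? & ? & ? & ?)]; try lra.
  exists (g * g). split; [nra|]. intros q Hq.
  destruct (turn_flat_close s p q g Hg0 Hq) as [Hfq Hgq].
  pose proof (sq_bound _ g Hg0 (Rle_lt_trans _ _ _ (pz_d3_le p q) Hq)) as Hzq.
  change (fst (nrm s) * px q + snd (nrm s) * py q) with (fst (turn s (flat q))).
  unfold stack3. change (px q, py q) with (flat q). split.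
  - intros [[_ Hz1]|[[HR Hz2]|[HR Hz3]]]; [lra| |];
      apply (inRect_turn s) in HR; destruct HR as [[? ?] _]; lra.
  - intros Hge.
    assert (HR3 : inRect R3 (flat q)).
    { apply (inRect_turn s). unfold inRect. split; split; lra. }
    destruct (Rle_dec (pz q) z2).
    + right; left. split; [apply H23, HR3 | lra].
    + right; right. split; [exact HR3 | lra].
Qed.

Definition wall_point (h : R) : pt3 :=
  let u := unturn s (xlo (turnR s R3), (ylo (turnR s R3) + yhi (turnR s R3)) / 2) in
  P3 (fst u) (snd u) h.

Lemma turn_wall_point h :
  turn s (flat (wall_point h)) =
  (xlo (turnR s R3), (ylo (turnR s R3) + yhi (turnR s R3)) / 2).
Proof. unfold wall_point, flat; cbn [px py]. rewrite <- surjective_pairing. apply turn_unturn. Qed.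

Lemma wall_point_wall h : z1 < h < z3 -> wall (wall_point h).
Proof.
  intros Hh. pose proof (rect_ok_turn s R3 ok3) as [_ Hy].
  unfold wall. rewrite turn_wall_point; simpl. lra.
Qed.

Lemma wall_point_R3 h : inRect R3 (flat (wall_point h)).
Proof.
  pose proof (rect_ok_turn s R3 ok3) as [Hx Hy].
  apply (inRect_turn s). rewrite turn_wall_point. unfold inRect; simpl. lra.
Qed.

Lemma bricks_see_wall p : stack3 R1 R2 R3 z0 z1 z2 z3 p ->
  exists B : pt3 -> Prop, conv B /\ (forall q, B q -> stack3 R1 R2 R3 z0 z1 z2 z3 q) /\
    B p /\ exists g, closureS d3 wall g /\ B g.
Proof.
  intros [Hp|[Hp|Hp]].
  - exists (brick R1 z0 z1). split; [apply brick_conv|].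
    split; [intros q Hq; left; exact Hq|]. split; [exact Hp|].
    exists (wall_point z1). split.
    + apply (closure_from_above _ _ _ _ z3); [lra|]. intros t Ht. apply wall_point_wall. lra.
    + split; [apply H12, H23, wall_point_R3 | simpl; lra].
  - exists (brick R2 z1 z2). split; [apply brick_conv|].
    split; [intros q Hq; right; left; exact Hq|]. split; [exact Hp|].
    exists (wall_point z2). split.
    + apply closure_self, wall_point_wall. lra.
    + split; [apply H23, wall_point_R3 | simpl; lra].
  - exists (brick R3 z2 z3). split; [apply brick_conv|].
    split; [intros q Hq; right; right; exact Hq|]. split; [exact Hp|].
    exists (wall_point z2). split.
    + apply closure_self, wall_point_wall. lra.
    + split; [apply wall_point_R3 | simpl; lra].
Qed.

Lemma shared_wall_guards :
  exists F, vertical_closed_face (stack3 R1 R2 R3 z0 z1 z2 z3) F /\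
            guards (stack3 R1 R2 R3 z0 z1 z2 z3) F.
Proof.
  apply (guard_of_convex_wall _ wall (fst (nrm s)) (snd (nrm s)) (xlo (turnR s R3))).
  - apply nrm_unit.
  - apply wall_conv.
  - exists (wall_point z2). apply wall_point_wall. lra.
  - exact wall_halfspace.
  - exact bricks_see_wall.
Qed.
End SharedWall.

Theorem mainTheorem7 (R1 R2 R3 : rect) (z0 z1 z2 z3 : R) (i j : nat) :
  rect_ok R1 -> rect_ok R2 -> rect_ok R3 ->
  z0 < z1 -> z1 < z2 -> z2 < z3 ->
  (1 <= i <= 4)%nat -> (1 <= j <= 4)%nat ->
  contact_sqcap R1 R2 i ->
  contact_sqcap R2 R3 j ->
  j <> 4%nat ->
  exists F : pt3 -> Prop,
    vertical_closed_face (stack3 R1 R2 R3 z0 z1 z2 z3) F /\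
    guards (stack3 R1 R2 R3 z0 z1 z2 z3) F.
Proof.
  intros _ _ ok3 h01 h12 h23 _ _ [H12 _] [H23 [_ [_ Htype]]] Hj.
  destruct (boundary_side_of_type_ne4 R2 R3) as [s Hs]; [rewrite Htype; exact Hj|].
  pose proof (shared_side R3 R2 s ok3 H23 Hs) as Hshared.
  exact (shared_wall_guards R1 R2 R3 z0 z1 z2 z3 s ok3 h01 h12 h23 H12 H23 Hshared).
Qed.
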